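(* For each $n$, let $Y_n$ and $\tilde Y_n$ be random variables taking values in the same countable set $\mathcal Y_n$. If $\lim_{n\to\infty}d(P_{Y_n},P_{\tilde Y_n})=0$, then $$\lim_{n\to\infty}L\Big(\log\tfrac{1}{P_{Y_n}(Y_n)},\ \log\tfrac{1}{P_{\tilde Y_n}(\tilde Y_n)}\Big)=0 .$$
   Context: Logarithms are natural. The variational distance is $d(P,Q)=\sum_a|P(a)-Q(a)|$. For real-valued random variables $U,V$, the Lévy distance is $$L(U,V)=\inf\{m>0:\ \forall x\in\mathbb R,\ \Pr\{U\le x-m\}-m\le\Pr\{V\le x\}\le \Pr\{U\le x+m\}+m\}.$$ *)

From Stdlib Require Import Reals Lra ClassicalEpsilon.
Open Scope R_scope.

(* A probability mass function on a countable set, the set being encoded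
   (via an injection) as a subset of nat; points outside the image get mass 0. *)
Definition pmf (P : nat -> R) : Prop :=
  (forall y, 0 <= P y) /\ infinite_sum P 1.

Definition series_val (f : nat -> R) : R :=
  epsilon (inhabits 0) (fun l => infinite_sum f l).

Definition vardist (P Q : nat -> R) : R :=
  series_val (fun y => Rabs (P y - Q y)).

(* Pr{ log (1 / P(Y)) <= x } where Y ~ P *)
Definition prob_info_le (P : nat -> R) (x : R) : R :=
  series_val (fun y => if Rle_dec (ln (/ P y)) x then P y else 0).

Definition is_inf (S : R -> Prop) (l : R) : Prop :=
  (forall m, S m -> l <= m) /\ (forall b, (forall m, S m -> b <= m) -> b <= l).

(* Levy distance between log(1/P(Y)) (Y ~ P) and log(1/Q(Ytilde)) (Ytilde ~ Q) *)
Definition levy_set (P Q : nat -> R) (m : R) : Prop :=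
  0 < m /\
  forall x : R,
    prob_info_le P (x - m) - m <= prob_info_le Q x /\
    prob_info_le Q x <= prob_info_le P (x + m) + m.

Definition levy_info (P Q : nat -> R) : R :=
  epsilon (inhabits 0) (fun l => is_inf (levy_set P Q) l).

From Stdlib Require Import Reals Lra ClassicalEpsilon.
Open Scope R_scope.

(* Write F_P(x) = Pr{log 1/P(Y) <= x} for Y ~ P.  For every
   m > 0 and every point y one has the pointwise estimate
     m * 1{log 1/Q(y) <= x} Q(y)
       <= m * 1{log 1/P(y) <= x + m} P(y) + (1 + m) |P(y) - Q(y)|,
   because when the first indicator fires and the second does not, the
   logarithms force Q(y) > e^m P(y) >= (1 + m) P(y).  Summing over y gives
   m F_Q(x) <= m F_P(x + m) + (1 + m) d(P,Q), and symmetrically with P and Q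
   exchanged.  Hence as soon as (1 + m) d(P,Q) <= m^2, the number m belongs to
   the set defining the Levy distance, whose infimum then lies in [0, m].
   Given e > 0 we take m = e/2; since d(P_n,Q_n) -> 0 the condition
   (1 + m) d <= m^2 holds for all large n, so the Levy distance is < e. *)

Lemma series_val_eq (f : nat -> R) (l : R) : infinite_sum f l -> series_val f = l.
Proof.
  intros Hf. unfold series_val. apply (uniqueness_sum f); [|exact Hf].
  apply epsilon_spec. exists l; exact Hf.
Qed.

Lemma infinite_sum_dominated (a b : nat -> R) (lb : R) :
  (forall k, 0 <= a k <= b k) -> infinite_sum b lb -> exists la, infinite_sum a la.
Proof.
  intros Hab Hb. destruct (Rseries_CV_comp a b Hab (exist _ lb Hb)) as [la Hla].
  exists la; exact Hla.
Qed.

Lemma infinite_sum_le (a b : nat -> R) (la lb : R) :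
  (forall k, a k <= b k) -> infinite_sum a la -> infinite_sum b lb -> la <= lb.
Proof.
  intros Hab Ha Hb. apply (@Rle_cv_lim (sum_f_R0 a) (sum_f_R0 b)); auto.
  intro n; apply sum_Rle; auto.
Qed.

Lemma infinite_sum_plus (a b : nat -> R) (la lb : R) :
  infinite_sum a la -> infinite_sum b lb ->
  infinite_sum (fun k => a k + b k) (la + lb).
Proof.
  intros Ha Hb. apply (Un_cv_ext (fun n => sum_f_R0 a n + sum_f_R0 b n)).
  - intro n; symmetry; apply plus_sum.
  - apply CV_plus; assumption.
Qed.

Lemma infinite_sum_scal (a : nat -> R) (c la : R) :
  infinite_sum a la -> infinite_sum (fun k => c * a k) (c * la).
Proof.
  intros Ha. apply (Un_cv_ext (fun n => c * sum_f_R0 a n)).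
  - intro n. rewrite scal_sum.
    apply sum_eq; intros; apply Rmult_comm.
  - apply CV_mult; [|exact Ha].
    intros eps Heps; exists O; intros; unfold Rdist; rewrite Rminus_diag, Rabs_R0; lra.
Qed.

Lemma vardist_sum (P Q : nat -> R) :
  pmf P -> pmf Q -> infinite_sum (fun y => Rabs (P y - Q y)) (vardist P Q).
Proof.
  intros [HP0 HP1] [HQ0 HQ1].
  destruct (infinite_sum_dominated (fun y => Rabs (P y - Q y)) (fun y => P y + Q y)
              (1 + 1)) as [l Hl].
  - intro y. specialize (HP0 y); specialize (HQ0 y).
    split; [apply Rabs_pos | apply Rabs_le; lra].
  - apply infinite_sum_plus; assumption.
  - unfold vardist; rewrite (series_val_eq _ l Hl); exact Hl.
Qed.

Definition info_mass (P : nat -> R) (x : R) (y : nat) : R :=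
  if Rle_dec (ln (/ P y)) x then P y else 0.

Lemma info_mass_bounds (P : nat -> R) (x : R) (y : nat) :
  0 <= P y -> 0 <= info_mass P x y <= P y.
Proof. intros; unfold info_mass; destruct Rle_dec; lra. Qed.

Lemma prob_info_le_sum (P : nat -> R) (x : R) :
  pmf P -> infinite_sum (info_mass P x) (prob_info_le P x).
Proof.
  intros [HP0 HP1].
  destruct (infinite_sum_dominated (info_mass P x) P 1) as [l Hl]; auto.
  - intro y; apply info_mass_bounds; auto.
  - unfold prob_info_le; fold (info_mass P x); rewrite (series_val_eq _ l Hl); exact Hl.
Qed.

(* If the information of p exceeds that of q by more than m > 0, then q is
   larger than p by a factor e^m > 1 + m. *)
Lemma info_gap (p q m : R) :
  0 < p -> 0 < q -> 0 < m -> ln (/ q) + m < ln (/ p) -> (1 + m) * p < q.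
Proof.
  intros Hp Hq Hm Hgap. rewrite !ln_Rinv in Hgap by assumption.
  assert (Hexp : p * exp m < q).
  { rewrite <- (exp_ln p), <- (exp_ln q), <- exp_plus by assumption.
    apply exp_increasing; lra. }
  pose proof (exp_ineq1 m ltac:(lra)). nra.
Qed.

Lemma info_mass_shift (P Q : nat -> R) (m x : R) (y : nat) :
  0 < m -> 0 <= P y -> 0 <= Q y ->
  m * info_mass Q x y <= m * info_mass P (x + m) y + (1 + m) * Rabs (P y - Q y).
Proof.
  intros Hm HP HQ.
  pose proof (Rabs_pos (P y - Q y)) as Habs0.
  pose proof (Rle_abs (Q y - P y)) as Habs. rewrite Rabs_minus_sym in Habs.
  pose proof (info_mass_bounds P (x + m) y HP) as HmassP.
  unfold info_mass at 1. destruct (Rle_dec (ln (/ Q y)) x) as [HxQ|HxQ]; [|nra].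
  unfold info_mass. destruct (Rle_dec (ln (/ P y)) (x + m)) as [HxP|HxP]; [nra|].
  destruct (Req_dec (P y) 0) as [HP0|HP0]; [nra|].
  destruct (Req_dec (Q y) 0) as [HQ0|HQ0]; [nra|].
  pose proof (info_gap (P y) (Q y) m ltac:(lra) ltac:(lra) Hm ltac:(lra)).
  nra.
Qed.

(* Summed estimate: m F_Q(x) <= m F_P(x + m) + (1 + m) V for any summable
   majorant D of |P - Q| with sum V (used with D = |P - Q| in both orders). *)
Lemma prob_info_shift (P Q D : nat -> R) (m x V : R) :
  pmf P -> pmf Q -> 0 < m ->
  (forall y, Rabs (P y - Q y) <= D y) -> infinite_sum D V ->
  m * prob_info_le Q x <= m * prob_info_le P (x + m) + (1 + m) * V.
Proof.
  intros HP HQ Hm HD HV.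
  apply (infinite_sum_le (fun y => m * info_mass Q x y)
           (fun y => m * info_mass P (x + m) y + (1 + m) * D y)).
  - intro y. pose proof (info_mass_shift P Q m x y Hm (proj1 HP y) (proj1 HQ y)).
    specialize (HD y). nra.
  - apply infinite_sum_scal, prob_info_le_sum, HQ.
  - apply infinite_sum_plus; apply infinite_sum_scal; [apply prob_info_le_sum, HP|exact HV].
Qed.

Lemma levy_set_of_vardist (P Q : nat -> R) (m : R) :
  pmf P -> pmf Q -> 0 < m -> (1 + m) * vardist P Q <= m * m -> levy_set P Q m.
Proof.
  intros HP HQ Hm Hsmall. pose proof (vardist_sum P Q HP HQ) as HV.
  split; [exact Hm|]. intro x. split.
  - assert (Hshift : m * prob_info_le P (x - m)
                     <= m * prob_info_le Q (x - m + m) + (1 + m) * vardist P Q).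
    { apply prob_info_shift with (D := fun y => Rabs (P y - Q y)); auto.
      intro y; rewrite Rabs_minus_sym; lra. }
    replace (x - m + m) with x in Hshift by ring. nra.
  - assert (Hshift : m * prob_info_le Q x
                     <= m * prob_info_le P (x + m) + (1 + m) * vardist P Q).
    { apply prob_info_shift with (D := fun y => Rabs (P y - Q y)); auto using Rle_refl. }
    nra.
Qed.

(* A nonempty set of nonnegative reals has an infimum (by completeness
   applied to the set of negatives). *)
Lemma is_inf_exists (S : R -> Prop) (m : R) :
  S m -> (forall z, S z -> 0 <= z) -> exists l, is_inf S l.
Proof.
  intros Hm Hpos.
  destruct (completeness (fun z => S (- z))) as [l [Hub Hlub]].
  - exists 0. intros z Hz. specialize (Hpos _ Hz). lra.
  - exists (- m). rewrite Ropp_involutive. exact Hm.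
  - exists (- l). split.
    + intros k Hk. assert (- k <= l) by (apply Hub; rewrite Ropp_involutive; exact Hk).
      lra.
    + intros b Hb. assert (l <= - b); [|lra].
      apply Hlub. intros z Hz. specialize (Hb _ Hz). lra.
Qed.

Lemma levy_info_bounds (P Q : nat -> R) (m : R) :
  levy_set P Q m -> 0 <= levy_info P Q <= m.
Proof.
  intros Hm.
  assert (Hex : exists l, is_inf (levy_set P Q) l).
  { apply (is_inf_exists _ m Hm). intros z [Hz _]; lra. }
  destruct (epsilon_spec (inhabits 0) _ Hex) as [Hlow Hgreatest].
  fold (levy_info P Q) in Hlow, Hgreatest. split.
  - apply Hgreatest. intros k [Hk _]; lra.
  - apply Hlow, Hm.
Qed.

Theorem lemma4 (P Q : nat -> nat -> R)
  (hP : forall n, pmf (P n)) (hQ : forall n, pmf (Q n))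
  (hd : Un_cv (fun n => vardist (P n) (Q n)) 0) :
  Un_cv (fun n => levy_info (P n) (Q n)) 0.
Proof.
  intros e He.
  set (m := e / 2).
  assert (Hm : 0 < m) by (unfold m; lra).
  assert (Hthreshold : 0 < m * m / (1 + m)) by (apply Rdiv_lt_0_compat; nra).
  destruct (hd _ Hthreshold) as [N HN]. exists N. intros n Hn.
  specialize (HN n Hn). unfold Rdist in HN |- *. rewrite Rminus_0_r in HN |- *.
  assert (Hsmall : (1 + m) * vardist (P n) (Q n) <= m * m).
  { pose proof (Rle_abs (vardist (P n) (Q n))).
    apply Rlt_le, (Rmult_lt_reg_r (/ (1 + m))); [apply Rinv_0_lt_compat; lra|].
    replace ((1 + m) * vardist (P n) (Q n) * / (1 + m)) with (vardist (P n) (Q n))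
      by (field; lra).
    unfold Rdiv in HN; lra. }
  pose proof (levy_info_bounds _ _ _ (levy_set_of_vardist _ _ m (hP n) (hQ n) Hm Hsmall)).
  rewrite Rabs_right by lra. unfold m in *; lra.
Qed.
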